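(* Let $X,Y$ be finite abelian groups and $Q\in M_{X\times Y}(\mathbb T)$ arbitrary. Then for $i,j\in X$ the matrix $\sum_{a\in Y}W_{ia,jb}$ does not depend on $b\in Y$, and there is a $*$-representation $\pi:C(Y\wr_*X)\to M_{X\times Y}(\mathbb C)$ with $$\pi(u_{ab}^{(i)})=\sum_{j\in X}W_{ia,jb},\qquad \pi(v_{ij})=\sum_{a\in Y}W_{ia,jb},$$ such that $\pi_Q=\pi\circ\Phi$, where $\Phi:C(S^+_{X\times Y})\to C(Y\wr_*X)$ is the morphism $u_{ia,jb}\mapsto u^{(i)}_{ab}v_{ij}$.
   Context: Finite abelian groups are written additively. For a finite abelian group $Z\simeq\mathbb Z_{N_1}\times\cdots\times\mathbb Z_{N_s}$, $F_Z=F_{N_1}\otimes\cdots\otimes F_{N_s}$ with $F_n=(e^{2\pi ijk/n})_{j,k\in\mathbb Z_n}$. Let $F=F_X$, $L=F_Y$, $M=|X|$, $N=|Y|$, and $(W_{ia,jb})_{kc,ld}=\frac{1}{MN}\frac{Q_{ic}Q_{jd}}{Q_{id}Q_{jc}}F_{i-j,k-l}L_{a-b,c-d}$. $C(S_Z^+)$ is the universal $C^*$-algebra generated by the entries of a magic matrix indexed by a finite set $Z$ (entries orthogonal projections, rows and columns summing to $1$), with $\Delta(u_{ij})=\sum_ku_{ik}\otimes u_{kj}$; $\pi_Q:C(S^+_{X\times Y})\to M_{X\times Y}(\mathbb C)$ is $u_{ia,jb}\mapsto W_{ia,jb}$. $C(Y)$ is regarded as the quotient of $C(S_Y^+)$ by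 the relations $u_{ab}=u_{cd}$ whenever $a-b=c-d$ (so $u_{ab}$ is the indicator function of $a-b$), and similarly $C(X)$ as a quotient of $C(S_X^+)$ with generators $v_{ij}$. The free wreath product $C(Y\wr_*X)$ is the quotient of the free product $C(Y)^{*X}*C(X)$ (with $u^{(i)}_{ab}$ the generators of the $i$-th copy of $C(Y)$) by the relations $[u^{(i)}_{ab},v_{ij}]=0$, with the Hopf structure making $w_{ia,jb}=u^{(i)}_{ab}v_{ij}$ a magic corepresentation. *)

From mathcomp Require Import all_boot all_order all_algebra.
From mathcomp Require Import reals trigo.
From mathcomp Require Import complex.

Set Implicit Arguments.
Unset Strict Implicit.
Unset Printing Implicit Defensive.

Import GRing.Theory Num.Theory.
Local Open Scope ring_scope.
Local Open Scope complex_scope.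

(* Finite abelian groups  Z = Z_{N_0} x ... x Z_{N_{s-1}}  (with 1 < N k).   *)

Definition agrp (s : nat) (N : 'I_s -> nat) : finType :=
  {dffun forall k : 'I_s, 'Z_(N k)}.

Definition gsub (s : nat) (N : 'I_s -> nat) (x y : agrp N) : agrp N :=
  [ffun k => x k - y k].

Definition omega (R : realType) (n : nat) : R[i] :=
  cos (2 * pi / n%:R) +i* sin (2 * pi / n%:R).

Definition fourier (R : realType) (s : nat) (N : 'I_s -> nat)
  (x y : agrp N) : R[i] :=
  \prod_(k < s) omega R (N k) ^+ ((x k : nat) * (y k : nat))%N.

(* Matrices in M_{X x Y}(C), indexed through an enumeration of X x Y.        *)

Definition idx (T : finType) := #|{: T}|.

Definition mxof (R : realType) (T : finType) (f : T -> T -> R[i])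
  : 'M[R[i]]_(idx T) :=
  \matrix_(p, q) f (enum_val p) (enum_val q).

Definition adj (R : realType) (n : nat) (A : 'M[R[i]]_n) : 'M[R[i]]_n :=
  (map_mx conjc A)^T.

Definition Wmx (R : realType) (s : nat) (N : 'I_s -> nat)
  (t : nat) (Nt : 'I_t -> nat) (Q : agrp N -> agrp Nt -> R[i])
  (i : agrp N) (a : agrp Nt) (j : agrp N) (b : agrp Nt)
  : 'M[R[i]]_(idx (agrp N * agrp Nt)%type) :=
  mxof (fun kc ld : (agrp N * agrp Nt)%type =>
    let k := kc.1 in let c := kc.2 in let l := ld.1 in let d := ld.2 in
    ((idx (agrp N))%:R * (idx (agrp Nt))%:R)^-1
      * (Q i c * Q j d / (Q i d * Q j c))
      * fourier R (gsub i j) (gsub k l)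
      * fourier R (gsub a b) (gsub c d)).

(* A *-representation of a universal C*-algebra given by generators and      *)
(* relations is the same as an assignment of the generators satisfying the   *)
(* relations; it acts on every *-polynomial in the generators by evaluation. *)

Inductive sexpr (K G : Type) : Type :=
  | SGen of G
  | SZero
  | SOne
  | SAdd of sexpr K G & sexpr K G
  | SMul of sexpr K G & sexpr K G
  | SScale of K & sexpr K G
  | SStar of sexpr K G.

Arguments SZero {K G}.
Arguments SOne {K G}.

Fixpoint seval (R : realType) (n : nat) (G : Type) (rho : G -> 'M[R[i]]_n)
  (e : sexpr R[i] G) : 'M[R[i]]_n :=
  match e with
  | SGen g => rho g
  | SZero => 0
  | SOne => 1%:M
  | SAdd e1 e2 => seval rho e1 + seval rho e2
  | SMul e1 e2 => seval rho e1 *m seval rho e2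
  | SScale c e1 => c *: seval rho e1
  | SStar e1 => adj (seval rho e1)
  end.

Fixpoint ssubst (K G H : Type) (f : G -> sexpr K H) (e : sexpr K G)
  : sexpr K H :=
  match e with
  | SGen g => f g
  | SZero => SZero
  | SOne => SOne
  | SAdd e1 e2 => SAdd (ssubst f e1) (ssubst f e2)
  | SMul e1 e2 => SMul (ssubst f e1) (ssubst f e2)
  | SScale c e1 => SScale c (ssubst f e1)
  | SStar e1 => SStar (ssubst f e1)
  end.

Definition is_proj (R : realType) (n : nat) (P : 'M[R[i]]_n) : Prop :=
  P *m P = P /\ adj P = P.

Definition magic (R : realType) (n : nat) (I : finType)
  (u : I -> I -> 'M[R[i]]_n) : Prop :=
  (forall p q, is_proj (u p q)) /\
  (forall p, \sum_(q : I) u p q = 1%:M) /\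
  (forall q, \sum_(p : I) u p q = 1%:M).

(* C(Z) as the quotient of C(S_Z^+) by  u_ab = u_cd  whenever a-b = c-d *)
Definition grp_rel (R : realType) (n : nat) (s : nat) (N : 'I_s -> nat)
  (u : agrp N -> agrp N -> 'M[R[i]]_n) : Prop :=
  magic u /\ (forall a b c d, gsub a b = gsub c d -> u a b = u c d).

(* generators of the free wreath product C(Y wr_* X) *)
Inductive wgen (X Y : Type) : Type :=
  | WU of X & Y & Y
  | WV of X & X.

Definition wreath_rep (R : realType) (n : nat) (s : nat) (N : 'I_s -> nat)
  (t : nat) (Nt : 'I_t -> nat)
  (pi : wgen (agrp N) (agrp Nt) -> 'M[R[i]]_n) : Prop :=
  (forall i, grp_rel (fun a b => pi (WU i a b))) /\
  grp_rel (fun i j => pi (WV _ i j)) /\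
  (forall i j a b, pi (WU i a b) *m pi (WV _ i j) = pi (WV _ i j) *m pi (WU i a b)).

Definition Phi (K : Type) (X Y : Type) (e : sexpr K ((X * Y) * (X * Y))%type)
  : sexpr K (wgen X Y) :=
  ssubst (fun g : ((X * Y) * (X * Y))%type =>
            SMul (SGen K (WU g.1.1 g.1.2 g.2.2)) (SGen K (WV Y g.1.1 g.2.1))) e.

Definition piQ (R : realType) (s : nat) (N : 'I_s -> nat)
  (t : nat) (Nt : 'I_t -> nat) (Q : agrp N -> agrp Nt -> R[i])
  (g : ((agrp N * agrp Nt) * (agrp N * agrp Nt))%type) :=
  Wmx Q g.1.1 g.1.2 g.2.1 g.2.2.

(* The matrix W_{ia,jb} is a diagonal twist, by the ratios of entries of Q, of
   the tensor product of the rank-one Fourier projections attached to i - j and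
   a - b.  Orthogonality of characters turns this into the multiplication rule
   W_{ia,jb} W_{ia,j'b'} = [j = j'] [a - b = a' - b'] W_{ia,jb}, and makes the
   row and column sums of W Fourier deltas.  Every relation of C(Y wr_* X) then
   follows: U^(i)_ab = sum_j W_{ia,jb} and V_ij = sum_a W_{ia,jb} (which does
   not depend on b) are magic projections, and U^(i)_ab V_ij = V_ij U^(i)_ab
   = W_{ia,jb}, which is exactly pi_Q = pi o Phi on generators. *)

From HB Require Import structures.
From mathcomp Require Import all_boot all_order all_algebra.
From mathcomp Require Import reals trigo.
From mathcomp Require Import complex.
From mathcomp Require Import ring lra.
Import Order.TTheory GRing.Theory Num.Theory.
Set Implicit Arguments.
Unset Strict Implicit.
Unset Printing Implicit Defensive.

Local Open Scope ring_scope.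
Local Open Scope complex_scope.

Section RootsOfUnity.
Variable R : realType.

Lemma omegaX (n m : nat) :
  omega R n ^+ m = cos (m%:R * (2 * pi / n%:R)) +i* sin (m%:R * (2 * pi / n%:R)).
Proof.
set th := 2 * pi / n%:R.
elim: m => [|m IHm]; first by rewrite expr0 mul0r cos0 sin0.
rewrite exprS IHm /omega -/th -[m.+1]add1n natrD mulrDl mul1r cosD sinD.
by congr (_ +i* _); simpc; ring.
Qed.

Lemma omega_order (n : nat) : (0 < n)%N -> omega R n ^+ n = 1.
Proof.
move=> n_gt0; have n0 : n%:R != 0 :> R by rewrite pnatr_eq0 -lt0n.
rewrite omegaX (_ : _ * _ = pi *+ 2) ?cos2pi ?sin2pi //.
by rewrite -mulr_natr; field.
Qed.

Lemma omegaX_neq1 (n m : nat) : (0 < m < n)%N -> omega R n ^+ m != 1.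
Proof.
case/andP=> m_gt0 lt_mn; have n_gt0 := ltn_trans m_gt0 lt_mn.
pose x : R := pi * m%:R / n%:R.
have sin_x_gt0 : 0 < sin x.
  apply: sin_gt0_pi; rewrite divr_gt0 ?mulr_gt0 ?pi_gt0 ?ltr0n //=.
  by rewrite ltr_pdivrMr ?ltr0n // ltr_pM2l ?pi_gt0 // ltr_nat.
rewrite omegaX (_ : _ * _ = x *+ 2); last first.
  by rewrite /x -mulr_natl; field; rewrite pnatr_eq0 -lt0n.
apply/negP=> /eqP[]; rewrite cos_mulr2n cos2sin2 => cos2x _.
have /eqP : sin x ^+ 2 = 0 by lra.
by rewrite sqrf_eq0 gt_eqF.
Qed.

Lemma conj_omega (n : nat) : (omega R n)^* = (omega R n)^-1.
Proof.
apply/esym/mulr1_eq; rewrite /omega; simpc.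
by rewrite cos2Dsin2 mulrC addNr.
Qed.

Lemma conjc_norm1 (z : R[i]) : `|z| = 1 -> z^* = z^-1.
Proof. by move=> z1; apply/esym/mulr1_eq; rewrite -sqr_normc z1 expr1n. Qed.
End RootsOfUnity.

Section FiniteAbelianGroup.
Variables (s : nat) (N : 'I_s -> nat).

Definition agrp_add (x y : agrp N) : agrp N := [ffun k => x k + y k].
Definition agrp_opp (x : agrp N) : agrp N := [ffun k => - x k].
Definition agrp_zero : agrp N := [ffun => 0].

Lemma agrp_addA : associative agrp_add.
Proof. by move=> x y z; apply/ffunP=> k; rewrite !ffunE addrA. Qed.
Lemma agrp_addC : commutative agrp_add.
Proof. by move=> x y; apply/ffunP=> k; rewrite !ffunE addrC. Qed.
Lemma agrp_add0 : left_id agrp_zero agrp_add.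
Proof. by move=> x; apply/ffunP=> k; rewrite !ffunE add0r. Qed.
Lemma agrp_addN : left_inverse agrp_zero agrp_opp agrp_add.
Proof. by move=> x; apply/ffunP=> k; rewrite !ffunE addNr. Qed.

(* [agrp N] only carries a finType structure; its componentwise group law is
   packed separately, in a type convertible to [agrp N]. *)
Definition agrpZ : finZmodType := HB.pack_for finZmodType (agrp N)
  (GRing.isZmodule.Build (agrp N) agrp_addA agrp_addC agrp_add0 agrp_addN).

Lemma agrpDE (x y : agrpZ) k : (x + y) k = x k + y k.
Proof. by rewrite ffunE. Qed.

Lemma agrp0E k : (0 : agrpZ) k = 0.
Proof. by rewrite ffunE. Qed.

Lemma gsubE (x y : agrpZ) : gsub x y = x - y.
Proof. by apply/ffunP=> k; rewrite !ffunE. Qed.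

End FiniteAbelianGroup.

Section Characters.
Variables (R : realType) (s : nat) (N : 'I_s -> nat).
Hypothesis N_gt1 : forall k, (1 < N k)%N.
Local Notation Z := (agrpZ N).
Local Notation F := (@fourier R s N).
Local Notation card := ((idx Z)%:R : R[i]).

Lemma fourierC (x y : Z) : F x y = F y x.
Proof. by apply: eq_bigr => k _; rewrite mulnC. Qed.

(* [Zp] addition is reduced modulo [(Zp_trunc n).+2], which is [n] itself. *)
Lemma fourierDl (x y z : Z) : F (x + y) z = F x z * F y z.
Proof.
rewrite /fourier -big_split /=; apply: eq_bigr => k _.
have n_gt0 : (0 < N k)%N by apply: ltn_trans (N_gt1 k).
rewrite agrpDE /= -exprD -mulnDl; move: (x k + y k)%N (z k : nat) => a b.
by rewrite Zp_cast // -(expr_mod _ (omega_order R n_gt0)) modnMml expr_mod ?omega_order.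
Qed.

Lemma fourierDr (x y z : Z) : F x (y + z) = F x y * F x z.
Proof. by rewrite fourierC fourierDl !(fourierC x). Qed.

Lemma fourier0l (z : Z) : F (0 : Z) z = 1.
Proof. by apply: big1 => k _; rewrite agrp0E mul0n expr0. Qed.

Lemma fourierNl (x z : Z) : F (- x) z = (F x z)^-1.
Proof. by apply/esym/mulr1_eq; rewrite -fourierDl subrr fourier0l. Qed.

Lemma fourierNr (x z : Z) : F x (- z) = (F x z)^-1.
Proof. by rewrite fourierC fourierNl fourierC. Qed.

Lemma conj_fourier (x z : Z) : (F x z)^* = (F x z)^-1.
Proof.
rewrite /fourier rmorph_prod -prodfV; apply: eq_bigr => k _.
by rewrite rmorphXn -exprVn; congr (_ ^+ _); exact: conj_omega.
Qed.

Lemma fourier_nontrivial (x : Z) : x != 0 -> exists z : Z, F x z != 1.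
Proof.
move=> x_neq0; have [k xk_neq0] : exists k, x k != 0.
  apply/existsP; apply: contraR x_neq0; rewrite negb_exists => /forallP x0.
  by apply/eqP/ffunP=> k; rewrite agrp0E; apply/eqP; rewrite -[_ == _]negbK.
exists [ffun k' => (k' == k)%:R]; rewrite /fourier (bigD1 k) //= big1 => [|k' k'k].
  rewrite ffunE eqxx mulr1 /= modn_small // muln1 omegaX_neq1 //.
  by rewrite lt0n xk_neq0 -[X in (_ < X)%N](Zp_cast (N_gt1 k)) /=.
by rewrite ffunE (negPf k'k) muln0 expr0.
Qed.

(* Translating [z] by an [e] with [F x e != 1] multiplies the sum by [F x e]. *)
Lemma sum_fourier (x : Z) : \sum_(z : Z) F x z = (x == 0)%:R * card.
Proof.
have [->|x_neq0] := eqVneq x 0.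
  by rewrite mul1r (eq_bigr (fun=> 1)) ?sumr_const // => z _; rewrite fourier0l.
have [e Fxe_neq1] := fourier_nontrivial x_neq0; rewrite mul0r.
have : (1 - F x e) * \sum_z F x z = 0.
  rewrite mulrBl mul1r mulr_sumr [X in X - _](reindex_inj (addIr e)) /=.
  by rewrite -sumrB big1 // => z _; rewrite fourierDr mulrC subrr.
by move/eqP; rewrite mulf_eq0 subr_eq0 eq_sym (negPf Fxe_neq1) => /eqP.
Qed.

Lemma sum_fourier_subr (i w : Z) : \sum_(j : Z) F (i - j) w = (w == 0)%:R * card.
Proof.
rewrite -sum_fourier [RHS](reindex_inj (subrI i)) /=.
by apply: eq_bigr => j _; rewrite fourierC.
Qed.

Lemma sum_fourier_subl (j w : Z) : \sum_(i : Z) F (i - j) w = (w == 0)%:R * card.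
Proof.
rewrite -sum_fourier [RHS](reindex_inj (subIr j)) /=.
by apply: eq_bigr => i _; rewrite fourierC.
Qed.

Lemma conj_fourier_sub (x k l : Z) : (F x (k - l))^* = F x (l - k).
Proof. by rewrite conj_fourier -fourierNr opprB. Qed.

Lemma fourier_conv (x y k m : Z) :
  \sum_(l : Z) F x (k - l) * F y (l - m) = (x == y)%:R * card * F x (k - m).
Proof.
transitivity (F x (k - m) * \sum_(l : Z) F (x - y) (m - l)).
  rewrite mulr_sumr; apply: eq_bigr => l _.
  have -> : k - l = (k - m) + (m - l) by rewrite addrA subrK.
  rewrite fourierDr -mulrA.
  by rewrite -[l - m]opprB fourierNr -fourierNl -fourierDl.
under eq_bigr do rewrite fourierC.
by rewrite sum_fourier_subr subr_eq0 mulrC.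
Qed.

End Characters.

Section MatricesOverFiniteType.
Variables (R : realType) (T : finType).
Implicit Types f g : T -> T -> R[i].

Lemma mxofM f g : mxof f *m mxof g = mxof (fun x z => \sum_y f x y * g y z).
Proof.
apply/matrixP=> p q; rewrite !mxE [RHS](reindex (@enum_val T T)) /=.
  by apply: eq_bigr => r _; rewrite !mxE.
by apply: onW_bij; apply: enum_val_bij.
Qed.

Lemma mxof1 : 1%:M = mxof (fun x y : T => (x == y)%:R : R[i]).
Proof. by apply/matrixP=> p q; rewrite !mxE (inj_eq enum_val_inj). Qed.

Lemma adj_mxof f : adj (mxof f) = mxof (fun x y => (f y x)^*).
Proof. by apply/matrixP=> p q; rewrite !mxE. Qed.

Lemma sum_mxof (I : finType) (f : I -> T -> T -> R[i]) :
  \sum_j mxof (f j) = mxof (fun x y => \sum_j f j x y).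
Proof.
by apply/matrixP=> p q; rewrite !mxE summxE; apply: eq_bigr => j _; rewrite mxE.
Qed.

Lemma eq_mxof f g : f =2 g -> mxof f = mxof g.
Proof. by move=> fg; apply/matrixP=> p q; rewrite !mxE fg. Qed.

Lemma mxof_boolM (b : bool) f :
  mxof (fun x y => b%:R * f x y) = if b then mxof f else 0.
Proof. by apply/matrixP=> p q; case: b; rewrite !mxE ?mul1r ?mul0r. Qed.

End MatricesOverFiniteType.

Lemma adj_sum (R : realType) (n : nat) (I : finType) (A : I -> 'M[R[i]]_n) :
  adj (\sum_j A j) = \sum_j adj (A j).
Proof.
apply/matrixP=> p q; rewrite !mxE !summxE rmorph_sum.
by apply: eq_bigr => j _; rewrite !mxE.
Qed.

Lemma sum_if_pred1 (I : finType) (V : nmodType) (P : pred I) (i0 : I) (v : I -> V) :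
  P =1 pred1 i0 -> \sum_i (if P i then v i else 0) = v i0.
Proof. by move=> P_i0; rewrite -big_mkcond (big_pred1 i0). Qed.

Section WMatrices.
Variables (R : realType) (s : nat) (N : 'I_s -> nat) (t : nat) (Nt : 'I_t -> nat).
Hypotheses (N_gt1 : forall k, (1 < N k)%N) (Nt_gt1 : forall k, (1 < Nt k)%N).
Variable Q : agrp N -> agrp Nt -> R[i].
Hypothesis normQ : forall x y, `|Q x y| = 1.

Local Notation X := (agrpZ N).
Local Notation Y := (agrpZ Nt).
Local Notation FX := (@fourier R s N).
Local Notation FY := (@fourier R t Nt).
Local Notation cardX := ((idx X)%:R : R[i]).
Local Notation cardY := ((idx Y)%:R : R[i]).
Implicit Types (i j : X) (a b : Y).

Lemma cardX_neq0 : cardX != 0.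
Proof. by rewrite pnatr_eq0 -lt0n; apply/card_gt0P; exists 0. Qed.

Lemma cardY_neq0 : cardY != 0.
Proof. by rewrite pnatr_eq0 -lt0n; apply/card_gt0P; exists 0. Qed.

Lemma Q_neq0 x y : Q x y != 0.
Proof. by rewrite -normr_eq0 normQ oner_eq0. Qed.

Definition Wentry (i : X) (a : Y) (j : X) (b : Y) (kc ld : X * Y) : R[i] :=
  (cardX * cardY)^-1 * (Q i kc.2 * Q j ld.2 / (Q i ld.2 * Q j kc.2))
  * FX (i - j) (kc.1 - ld.1) * FY (a - b) (kc.2 - ld.2).

Lemma WmxE i a j b : Wmx Q i a j b = mxof (Wentry i a j b).
Proof. by apply: eq_mxof => kc ld; rewrite /Wentry !gsubE. Qed.

(* The [l]- and [d]-sums of a product of two entries are character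
   convolutions; the [Q]-twists cancel once the first one forces [j = j']. *)
Lemma Wentry_mul i a j b a' j' b' (kc me : X * Y) :
  \sum_(p : X * Y) Wentry i a j b kc p * Wentry i a' j' b' p me
  = ((j == j') && (a - b == a' - b'))%:R * Wentry i a j b kc me.
Proof.
case: kc me => [k c] [m e].
pose C := (cardX * cardY)^-1 * (cardX * cardY)^-1 * (Q i c / Q i e).
pose A (l : X) := FX (i - j) (k - l) * FX (i - j') (l - m).
pose B (d : Y) := Q j d * Q j' e / (Q j c * Q j' d)
                  * (FY (a - b) (c - d) * FY (a' - b') (d - e)).
transitivity (\sum_(l : X) \sum_(d : Y) C * A l * B d).
  rewrite pair_big; apply: eq_bigr => -[l d] _; rewrite /Wentry /C /A /B /=.
  by field; rewrite !Q_neq0 cardX_neq0 cardY_neq0.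
transitivity (C * (\sum_l A l) * (\sum_d B d)).
  rewrite -mulrA mulr_suml mulr_sumr; apply: eq_bigr => l _.
  by rewrite mulrA mulr_sumr.
rewrite /A fourier_conv // (inj_eq (subrI i)).
have [jj'|_] /= := eqVneq j j'; last by rewrite !(mulr0, mul0r).
subst j'.
have -> : \sum_d B d = Q j e / Q j c
    * \sum_d FY (a - b) (c - d) * FY (a' - b') (d - e).
  rewrite mulr_sumr; apply: eq_bigr => d _; rewrite /B; congr (_ * _).
  by field; rewrite !Q_neq0.
rewrite fourier_conv //.
have [_|_] /= := eqVneq (a - b) (a' - b'); last by rewrite !(mulr0, mul0r).
rewrite /C /Wentry /=; field.
by rewrite !Q_neq0 cardX_neq0 cardY_neq0.
Qed.

Lemma Wmx_mul i a j b a' j' b' :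
  Wmx Q i a j b *m Wmx Q i a' j' b'
  = if (j == j') && (a - b == a' - b') then Wmx Q i a j b else 0.
Proof.
rewrite !WmxE mxofM -mxof_boolM; apply: eq_mxof => kc me.
exact: Wentry_mul.
Qed.

Lemma adj_Wmx i a j b : adj (Wmx Q i a j b) = Wmx Q i a j b.
Proof.
rewrite WmxE adj_mxof; apply: eq_mxof => -[k c] [l d]; rewrite /Wentry /=.
rewrite !(rmorphM, fmorphV) /=.
rewrite !(conjc_norm1 (normQ _ _), conj_fourier_sub, conjc_nat) //.
by field; rewrite !Q_neq0 cardX_neq0 cardY_neq0.
Qed.

Definition Ventry (i j : X) (kc ld : X * Y) : R[i] :=
  cardX^-1 * (kc.2 == ld.2)%:R * FX (i - j) (kc.1 - ld.1).

Definition Vmx (i j : X) := mxof (Ventry i j).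

Lemma sum_Wentry0 i j kc ld : \sum_(y : Y) Wentry i y j 0 kc ld = Ventry i j kc ld.
Proof.
rewrite /Wentry -mulr_sumr.
under eq_bigr do rewrite subr0 fourierC.
rewrite sum_fourier // subr_eq0 /Ventry.
have [->|_] := eqVneq kc.2 ld.2; last by rewrite !(mulr0, mul0r).
by field; rewrite !Q_neq0 cardX_neq0 cardY_neq0.
Qed.

Lemma sum_Wmx_l i j b : \sum_(a : agrp Nt) Wmx Q i a j b = Vmx i j.
Proof.
under eq_bigr do rewrite WmxE.
rewrite sum_mxof; apply: eq_mxof => kc ld; rewrite -sum_Wentry0.
by rewrite [RHS](reindex_inj (subIr b)); apply: eq_bigr => a _; rewrite /Wentry subr0.
Qed.

Lemma sum_Wmx_r i a j : \sum_(b : agrp Nt) Wmx Q i a j b = Vmx i j.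
Proof.
under eq_bigr do rewrite WmxE.
rewrite sum_mxof; apply: eq_mxof => kc ld; rewrite -sum_Wentry0.
by rewrite [RHS](reindex_inj (subrI a)); apply: eq_bigr => b _; rewrite /Wentry subr0.
Qed.

Lemma Ventry_sum_delta (k l : X) (c d : Y) :
  cardX^-1 * (c == d)%:R * ((k - l == 0)%:R * cardX) = ((k, c) == (l, d))%:R.
Proof.
rewrite subr_eq0 xpair_eqE.
by case: eqP; case: eqP => _ _;
  rewrite /= ?(mulr0, mul0r, mulr1, mul1r) ?mulVf ?cardX_neq0.
Qed.

Lemma sum_Vmx_r i : \sum_(j : agrp N) Vmx i j = 1%:M.
Proof.
rewrite sum_mxof mxof1; apply: eq_mxof => -[k c] [l d].
by rewrite /Ventry -mulr_sumr sum_fourier_subr // Ventry_sum_delta.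
Qed.

Lemma sum_Vmx_l j : \sum_(i : agrp N) Vmx i j = 1%:M.
Proof.
rewrite sum_mxof mxof1; apply: eq_mxof => -[k c] [l d].
by rewrite /Ventry -mulr_sumr sum_fourier_subl // Ventry_sum_delta.
Qed.

Definition Umx i a b := \sum_(j : agrp N) Wmx Q i a j b.

Lemma mul_Umx_Vmx i a j b : Umx i a b *m Vmx i j = Wmx Q i a j b.
Proof.
rewrite -(sum_Wmx_l i j b) mulmx_suml.
under eq_bigr do rewrite mulmx_sumr.
under eq_bigr do under eq_bigr do rewrite Wmx_mul.
rewrite pair_big /= (sum_if_pred1 (i0 := (j, a))) // => -[j' a'] /=.
by rewrite xpair_eqE (inj_eq (subIr b)) (eq_sym a).
Qed.

Lemma mul_Vmx_Umx i a j b : Vmx i j *m Umx i a b = Wmx Q i a j b.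
Proof.
rewrite -(sum_Wmx_l i j b) mulmx_suml.
under eq_bigr do rewrite mulmx_sumr.
under eq_bigr do under eq_bigr do rewrite Wmx_mul.
rewrite exchange_big pair_big /= (sum_if_pred1 (i0 := (j, a))) // => -[j' a'] /=.
by rewrite xpair_eqE (inj_eq (subIr b)) (eq_sym j) andbC.
Qed.

Lemma Umx_proj i a b : is_proj (Umx i a b).
Proof.
split; last by rewrite adj_sum; apply: eq_bigr => j _; rewrite adj_Wmx.
rewrite mulmx_suml; apply: eq_bigr => j _; rewrite mulmx_sumr.
under eq_bigr do rewrite Wmx_mul.
by rewrite (sum_if_pred1 (i0 := j)) // => j'; rewrite eqxx andbT eq_sym.
Qed.

Lemma Vmx_proj i j : is_proj (Vmx i j).
Proof.
rewrite -(sum_Wmx_l i j 0); split.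
  rewrite mulmx_suml; apply: eq_bigr => a _; rewrite mulmx_sumr.
  under eq_bigr do rewrite Wmx_mul.
  by rewrite (sum_if_pred1 (i0 := a)) // => a'; rewrite eqxx (inj_eq (subIr 0)) eq_sym.
by rewrite adj_sum; apply: eq_bigr => a _; rewrite adj_Wmx.
Qed.

Lemma Umx_grp_rel i : grp_rel (Umx i).
Proof.
split; last by move=> a b c d eq_ab_cd; rewrite /Umx /Wmx eq_ab_cd.
split; first exact: Umx_proj.
split=> [a|b]; rewrite /Umx exchange_big /=.
  by under eq_bigr do rewrite sum_Wmx_r; apply: sum_Vmx_r.
by under eq_bigr do rewrite sum_Wmx_l; apply: sum_Vmx_r.
Qed.

Lemma Vmx_grp_rel : grp_rel Vmx.
Proof.
split; last by move=> i j i' j'; rewrite !gsubE /Vmx /Ventry => ->.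
by split; [exact: Vmx_proj | split; [exact: sum_Vmx_r | exact: sum_Vmx_l]].
Qed.

Definition piW (g : wgen (agrp N) (agrp Nt))
    : 'M[R[i]]_(idx (agrp N * agrp Nt)%type) :=
  match g with
  | WU i a b => Umx i a b
  | WV i j => Vmx i j
  end.

Lemma wreath_rep_piW : wreath_rep piW.
Proof.
split; [exact: Umx_grp_rel | split; first exact: Vmx_grp_rel].
by move=> i j a b /=; rewrite mul_Umx_Vmx mul_Vmx_Umx.
Qed.

End WMatrices.

Lemma seval_ssubst (R : realType) (n : nat) (G H : Type) (rho : H -> 'M[R[i]]_n)
    (f : G -> sexpr R[i] H) (e : sexpr R[i] G) :
  seval rho (ssubst f e) = seval (fun g => seval rho (f g)) e.
Proof. by elim: e => [g| | |e1 /= -> e2 ->|e1 /= -> e2 ->|c e /= ->|e /= ->]. Qed.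

Lemma eq_seval (R : realType) (n : nat) (G : Type) (rho1 rho2 : G -> 'M[R[i]]_n) :
  rho1 =1 rho2 -> seval rho1 =1 seval rho2.
Proof.
by move=> eq_rho; elim=> [g| | |e1 /= -> e2 ->|e1 /= -> e2 ->|c e /= ->|e /= ->] /=.
Qed.

Theorem proposition3p6 (R : realType)
  (s : nat) (N : 'I_s -> nat) (hN : forall k, (1 < N k)%N)
  (t : nat) (Nt : 'I_t -> nat) (hNt : forall k, (1 < Nt k)%N)
  (Q : agrp N -> agrp Nt -> R[i]) (hQ : forall x y, `|Q x y| = 1) :
  (forall (i j : agrp N) (b b' : agrp Nt),
     \sum_(a : agrp Nt) Wmx Q i a j b = \sum_(a : agrp Nt) Wmx Q i a j b')
  /\
  exists pi : wgen (agrp N) (agrp Nt) -> 'M[R[i]]_(idx (agrp N * agrp Nt)%type),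
    wreath_rep pi /\
    (forall i a b, pi (WU i a b) = \sum_(j : agrp N) Wmx Q i a j b) /\
    (forall i j b, pi (WV _ i j) = \sum_(a : agrp Nt) Wmx Q i a j b) /\
    (forall e : sexpr R[i] ((agrp N * agrp Nt) * (agrp N * agrp Nt))%type,
       seval (piQ Q) e = seval pi (Phi e)).
Proof.
split; first by move=> i j b b'; rewrite !(sum_Wmx_l hNt hQ).
exists (piW Q); split; first exact: wreath_rep_piW.
split=> //; split=> [i j b|e]; first by rewrite (sum_Wmx_l hNt hQ).
rewrite /Phi seval_ssubst; apply: eq_seval => -[[i a] [j b]] /=.
by rewrite mul_Umx_Vmx.
Qed.
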